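(* Let $S$ be a finite set, $T$ a set, $\pi:S\to T$ a map, and $\mathbb{P}$ a $\pi$-measurable probability measure on $S$. Let $J\ge1$, let $T_1,\dots,T_J$ be sets and $\pi_j:S\to T_j$ maps forming a $\pi$-inverse system, let $B_1,\dots,B_J\subseteq S$, and let $\delta_1,\dots,\delta_J\in[0,1/2]$. Let $\mathbb{P}_0,\dots,\mathbb{P}_J$, $\alpha_j$, $M_j^{(1)},M_j^{(2)}$ be as defined in the context. Assume that $B_j$ is $\pi_j$-measurable for every $1\le j\le J$. If \[ \sum_{j=1}^J\min\left\{M_j^{(1)},\frac{M_j^{(2)}}{4\delta_j(1-\delta_j)}\right\}<1, \] then $\mathbb{P}_J\big(\bigcup_{1\le j\le J}B_j\big)<1$.
   Context: A function $f:S\to\mathbb{C}$ is $\pi$-measurable if $f(x)=f(x')$ whenever $\pi(x)=\pi(x')$; a subset $B\subseteq S$ is $\pi$-measurable if $x\in B$, $x'\in S$, $\pi(x')=\pi(x)$ imply $x'\in B$. A probability measure on the finite set $S$ is identified with its mass function $x\mapsto\mathbb{P}(x)$, and it is $\pi$-measurable if this function is. The maps $\pi_1,\dots,\pi_J$ form a $\pi$-inverse system if, setting $\pi_0=\pi$, for every $1\le j\le J$ and $x,x'\in S$, $\pi_j(x)=\pi_j(x')$ implies $\pi_{j-1}(x)=\pi_{j-1}(x')$. Construction: $\mathbb{P}_0=\mathbb{P}$; for $1\le j\le J$ and $x\in S$ let $F_{j-1}(x)=\{x'\in S:\pi_{j-1}(x')=\pi_{j-1}(x)\}$, $\alpha_j(x)=|F_{j-1}(x)\cap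 B_j|/|F_{j-1}(x)|$, and \[ \mathbb{P}_j(x)=\mathbb{P}_{j-1}(x)\cdot\begin{cases}\dfrac{1_{x\notin B_j}}{1-\alpha_j(x)}, & \alpha_j(x)<\delta_j,\\[2mm] \dfrac{\alpha_j(x)-1_{x\in B_j}\delta_j}{\alpha_j(x)(1-\delta_j)}, & \alpha_j(x)\ge\delta_j,\end{cases} \] where in the degenerate case $\alpha_j(x)=0$ (possible in the second case only if $\delta_j=0$) the factor is taken to be $1$. Each $\mathbb{P}_j$ is a probability measure on $S$. For $f:S\to\mathbb{C}$ set $\mathbb{E}_j[f]=\sum_{x\in S}f(x)\mathbb{P}_j(x)$, and $M_j^{(1)}=\mathbb{E}_{j-1}[\alpha_j]$, $M_j^{(2)}=\mathbb{E}_{j-1}[\alpha_j^2]$. When $\delta_j=0$ the term $M_j^{(2)}/(4\delta_j(1-\delta_j))$ is interpreted as $+\infty$, so the minimum equals $M_j^{(1)}$. *)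

From HB Require Import structures.
From mathcomp Require Import all_boot all_order all_algebra.
From mathcomp Require Import boolp.
Set Implicit Arguments. Unset Strict Implicit. Unset Printing Implicit Defensive.
Import Order.TTheory GRing.Theory Num.Theory.
Local Open Scope ring_scope.

Section Construction.
Variables (R : realFieldType) (S : finType) (T : Type) (pi : S -> T).
Variables (Ts : nat -> Type) (pis : forall j : nat, S -> Ts j).
(* pis j is pi_j for j >= 1; pi_0 := pi (pis 0 is never used). *)
Variables (B : nat -> {set S}) (delta : nat -> R) (P : S -> R).

Definition same (j : nat) (x x' : S) : bool :=
  if j is j'.+1 then `[< pis j x = pis j x' >] else `[< pi x = pi x' >].

Definition fiber (j : nat) (x : S) : {set S} := [set x' | same j x' x].

Definition alpha (j : nat) (x : S) : R :=
  (#|fiber j.-1 x :&: B j|)%:R / (#|fiber j.-1 x|)%:R.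

Definition factor (j : nat) (x : S) : R :=
  let a := alpha j x in
  if a < delta j then (if x \in B j then 0 else 1 / (1 - a))
  else if a == 0 then 1
  else (a - (x \in B j)%:R * delta j) / (a * (1 - delta j)).

Fixpoint Pj (j : nat) : S -> R :=
  match j with
  | 0 => P
  | j'.+1 => fun x => Pj j' x * factor j x
  end.

Definition Ej (j : nat) (f : S -> R) : R := \sum_(x : S) f x * Pj j x.

Definition M1 (j : nat) : R := Ej j.-1 (alpha j).
Definition M2 (j : nat) : R := Ej j.-1 (fun x => alpha j x ^+ 2).

(* min{M1, M2/(4 delta (1-delta))}, with the delta = 0 convention giving M1 *)
Definition min_term (j : nat) : R :=
  if delta j == 0 then M1 j
  else Num.min (M1 j) (M2 j / (4 * delta j * (1 - delta j))).
End Construction.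

(* By the union bound it suffices to show P_J(B_j) <= min_term j.
   Step j multiplies P_{j-1} by 1 + s(alpha_j) (1_{B_j} - alpha_j), where the
   slope s depends on x only through alpha_j; as alpha_j is the average of
   1_{B_j} over the pi_{j-1}-fibres, this step preserves the mass of every
   pi_{j-1}-measurable set.  Since B_j is pi_k-measurable for all k >= j, this
   gives P_J(B_j) = P_j(B_j) = E_{j-1}[max(alpha_j - delta_j, 0) / (1 - delta_j)],
   and max(a - d, 0) / (1 - d) is at most a and at most a^2 / (4 d (1 - d)). *)

From Pilot Require Import Defs.
From HB Require Import structures.
From mathcomp Require Import all_boot all_order all_algebra.
From mathcomp Require Import boolp.
Import Order.TTheory GRing.Theory Num.Theory.
Local Open Scope ring_scope.
From mathcomp Require Import ring lra.
Set Implicit Arguments. Unset Strict Implicit. Unset Printing Implicit Defensive.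

Section UnionBound.
Variables (R : numDomainType) (S : finType) (F : S -> R).
Hypothesis F_ge0 : forall x, 0 <= F x.

Lemma sum_bigcup_le (I : Type) (r : seq I) (A : I -> {set S}) :
  \sum_(x in \bigcup_(i <- r) A i) F x <= \sum_(i <- r) \sum_(x in A i) F x.
Proof.
elim: r => [|i r IHr]; first by rewrite !big_nil big_set0.
rewrite !big_cons; apply: le_trans (lerD (lexx _) IHr).
rewrite !(big_mkcond [in _]) -big_split /=; apply: ler_sum => x _.
by rewrite in_setU; case: (x \in A i); case: (x \in _); rewrite /= ?addr0 ?add0r ?lerDl.
Qed.

End UnionBound.

Section FiberAverage.
Variables (R : numFieldType) (S : finType) (e : rel S).
Hypotheses (e_refl : reflexive e) (e_sym : symmetric e) (e_trans : transitive e).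

Let fib x := [set y | e y x].

Lemma sum_mul_fiber_frac (A : {set S}) (G : S -> R) :
  (forall x y, e x y -> G x = G y) ->
  \sum_x G x * ((#|fib x :&: A|)%:R / (#|fib x|)%:R) = \sum_(x in A) G x.
Proof.
move=> G_const.
have fibE x y : e y x -> fib y = fib x.
  move=> eyx; apply/setP => z; rewrite !inE; apply/idP/idP => ezw.
    exact: e_trans ezw eyx.
  by apply: e_trans ezw _; rewrite e_sym.
have fib_neq0 x : (#|fib x|%:R : R) != 0.
  by rewrite pnatr_eq0 -lt0n; apply/card_gt0P; exists x; rewrite inE.
transitivity (\sum_x \sum_(y in A | e y x) G y / (#|fib y|)%:R).
  apply: eq_bigr => x _.
  rewrite (eq_bigr (fun=> G x / #|fib x|%:R)) => [|y /andP[_ eyx]]; last first.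
    by rewrite (G_const _ _ eyx) (fibE _ _ eyx).
  rewrite sumr_const mulrCA mulrC mulr_natr; congr (_ *+ _).
  by apply: eq_card => y; rewrite !inE andbC.
rewrite (exchange_big_dep [in A]) => [|? ? _ /andP[] //].
apply: eq_bigr => y yA; rewrite sumr_const.
have -> : #|[pred x | (y \in A) && e y x]| = #|fib y|.
  by apply: eq_card => x; rewrite !inE yA e_sym.
by rewrite -[LHS]mulr_natr divfK.
Qed.

End FiberAverage.

Section FactorArithmetic.
Variable R : realFieldType.
Implicit Types d a : R.

Definition factor_slope d a : R :=
  if a < d then - (1 - a)^-1 else if a == 0 then 0 else - (d / (a * (1 - d))).

Definition excess d a : R := Num.max (a - d) 0 / (1 - d).

Lemma mul_factor_in_B d a : 0 <= d < 1 ->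
  (1 + factor_slope d a * (1 - a)) * a = excess d a.
Proof.
move=> /andP[d_ge0 d_lt1]; have d1_neq0 : 1 - d != 0 by rewrite subr_eq0 gt_eqF.
rewrite /factor_slope /excess; case: ltP => [a_lt_d | d_le_a].
  have a1_neq0 : 1 - a != 0 by rewrite subr_eq0 gt_eqF // (lt_trans a_lt_d).
  by rewrite max_r ?subr_le0 ?ltW // mulNr mulVf // subrr !mul0r.
rewrite max_l ?subr_ge0 //; case: eqP => [a0 | /eqP a_neq0].
  have d0 : d = 0 by apply/le_anti; rewrite d_ge0 -a0 d_le_a.
  by rewrite a0 d0 mulr0 subrr mul0r.
by field; rewrite d1_neq0 a_neq0.
Qed.

Lemma excess_le d a : 0 <= d < 1 -> 0 <= a <= 1 -> excess d a <= a.
Proof.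
move=> /andP[d_ge0 d_lt1] /andP[a_ge0 a_le1]; rewrite /excess ler_pdivrMr ?subr_gt0 //.
by rewrite ge_max; apply/andP; split; nra.
Qed.

Lemma excess_le_sq d a : 0 < d < 1 -> excess d a <= a ^+ 2 / (4 * d * (1 - d)).
Proof.
move=> /andP[d_gt0 d_lt1]; rewrite /excess.
have q_gt0 : 0 < 4 * d * (1 - d) by rewrite !mulr_gt0 ?subr_gt0.
have [ad_le0 | ad_gt0] := leP (a - d) 0.
  by rewrite mul0r divr_ge0 ?sqr_ge0 ?ltW.
rewrite ler_pdivrMr ?subr_gt0 // mulrAC ler_pdivlMr // -subr_ge0.
rewrite (_ : _ - _ = (a - 2 * d) ^+ 2 * (1 - d)); last by ring.
by rewrite mulr_ge0 ?sqr_ge0 // subr_ge0 ltW.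
Qed.

End FactorArithmetic.

Section Construction.
Variables (R : realFieldType) (S : finType) (T : Type) (pi : S -> T).
Variables (Ts : nat -> Type) (pis : forall j : nat, S -> Ts j).
Variables (B : nat -> {set S}) (delta : nat -> R) (P : S -> R).

Local Notation same := (same pi pis).
Local Notation alpha := (alpha R pi pis B).
Local Notation factor := (factor pi pis B delta).
Local Notation Pj := (Pj pi pis B delta P).
Local Notation Ej := (Ej pi pis B delta P).

Definition pi_measurable (U : Type) k (f : S -> U) := forall x y, same k x y -> f x = f y.

Lemma same_refl k : reflexive (same k).
Proof. by case: k => [|k] x /=; apply/asboolP. Qed.

Lemma same_sym k : symmetric (same k).
Proof. by case: k => [|k] x y /=; apply/asboolP/asboolP. Qed.

Lemma same_trans k : transitive (same k).
Proof. by case: k => [|k] y x z /= /asboolP-> /asboolP->; apply/asboolP. Qed.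

Lemma alpha_ge0 j x : 0 <= alpha j x.
Proof. by rewrite divr_ge0 ?ler0n. Qed.

Lemma alpha_le1 j x : alpha j x <= 1.
Proof.
rewrite ler_pdivrMr ?mul1r ?ler_nat ?subset_leq_card ?subsetIl // ltr0n.
by apply/card_gt0P; exists x; rewrite inE same_refl.
Qed.

Lemma alpha_measurable k : pi_measurable k (alpha k.+1).
Proof.
move=> x y xy; have fiber_xy : fiber pi pis k x = fiber pi pis k y.
  apply/setP => z; rewrite !inE; apply/idP/idP => zw; first exact: same_trans zw xy.
  by apply: same_trans zw _; rewrite same_sym.
by rewrite /Defs.alpha /= fiber_xy.
Qed.

Lemma sum_mul_alpha k (G : S -> R) : pi_measurable k G ->
  \sum_x G x * alpha k.+1 x = \sum_(x in B k.+1) G x.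
Proof.
by apply: sum_mul_fiber_frac; [apply: same_refl | apply: same_sym | apply: same_trans].
Qed.

Lemma factor_affine k x : delta k.+1 < 1 ->
  factor k.+1 x = 1 + factor_slope (delta k.+1) (alpha k.+1 x)
                      * ((x \in B k.+1)%:R - alpha k.+1 x).
Proof.
rewrite /Defs.factor /factor_slope; set a := alpha k.+1 x; set d := delta k.+1.
move=> d_lt1; have d1_neq0 : 1 - d != 0 by rewrite subr_eq0 gt_eqF.
case: ltP => [a_lt_d | _].
  have a1_neq0 : 1 - a != 0 by rewrite subr_eq0 gt_eqF // (lt_trans a_lt_d).
  by case: (x \in B k.+1) => /=; field.
case: eqP => [_ | /eqP a_neq0]; first by rewrite mul0r addr0.
by case: (x \in B k.+1) => /=; field; rewrite a_neq0 d1_neq0.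
Qed.

Lemma factor_ge0 k x : delta k.+1 < 1 -> 0 <= factor k.+1 x.
Proof.
rewrite /Defs.factor; have := alpha_ge0 k.+1 x.
set a := alpha k.+1 x; set d := delta k.+1 => a_ge0 d_lt1.
case: ltP => [a_lt_d | d_le_a].
  by case: (x \in B k.+1); rewrite // div1r invr_ge0 subr_ge0 ltW // (lt_trans a_lt_d).
case: eqP => // _; apply: divr_ge0; last by rewrite mulr_ge0 // subr_ge0 ltW.
by case: (x \in B k.+1); rewrite /= ?mul1r ?mul0r subr_ge0.
Qed.

Lemma factor_measurable k : subrel (same k.+1) (same k) ->
  pi_measurable k.+1 [in B k.+1] -> pi_measurable k.+1 (factor k.+1).
Proof.
move=> refines B_meas x y xy.
by rewrite /Defs.factor (alpha_measurable (refines _ _ xy)) (B_meas _ _ xy).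
Qed.

Lemma sum_Pj_succ k (C : {set S}) : delta k.+1 < 1 ->
  pi_measurable k (Pj k) -> pi_measurable k [in C] ->
  \sum_(x in C) Pj k.+1 x = \sum_(x in C) Pj k x.
Proof.
move=> d_lt1 Pk_meas C_meas.
pose G x := (x \in C)%:R * Pj k x * factor_slope (delta k.+1) (alpha k.+1 x).
have G_meas : pi_measurable k G.
  by move=> x y xy; rewrite /G (C_meas _ _ xy) (Pk_meas _ _ xy) (alpha_measurable xy).
have -> : \sum_(x in C) Pj k.+1 x
    = \sum_(x in C) Pj k x + (\sum_(x in B k.+1) G x - \sum_x G x * alpha k.+1 x).
  rewrite !(big_mkcond [in _]) -sumrB -big_split /=; apply: eq_bigr => x _.
  rewrite factor_affine // /G; case: (x \in C); case: (x \in B k.+1); rewrite /=; ring.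
by rewrite sum_mul_alpha // subrr addr0.
Qed.

Lemma sum_Pj_succ_B k : 0 <= delta k.+1 < 1 -> pi_measurable k (Pj k) ->
  \sum_(x in B k.+1) Pj k.+1 x = Ej k (excess (delta k.+1) \o alpha k.+1).
Proof.
move=> /andP[d_ge0 d_lt1] Pk_meas.
pose G x := Pj k x * (1 + factor_slope (delta k.+1) (alpha k.+1 x) * (1 - alpha k.+1 x)).
have G_meas : pi_measurable k G.
  by move=> x y xy; rewrite /G (Pk_meas _ _ xy) (alpha_measurable xy).
rewrite (eq_bigr G) => [|x xB]; last by rewrite /= factor_affine // xB.
rewrite -sum_mul_alpha //; apply: eq_bigr => x _.
by rewrite /G -mulrA mul_factor_in_B ?d_ge0 // mulrC.
Qed.

Lemma sum_Pj_succ_B_le_min_term k : 0 <= delta k.+1 < 1 ->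
  (forall x, 0 <= Pj k x) -> pi_measurable k (Pj k) ->
  \sum_(x in B k.+1) Pj k.+1 x <= min_term pi pis B delta P k.+1.
Proof.
move=> d_range Pk_ge0 Pk_meas; rewrite sum_Pj_succ_B //.
have a_range x : 0 <= alpha k.+1 x <= 1 by rewrite alpha_ge0 alpha_le1.
have le_M1 : Ej k (excess (delta k.+1) \o alpha k.+1) <= M1 pi pis B delta P k.+1.
  by apply: ler_sum => x _; rewrite ler_wpM2r ?excess_le.
rewrite /min_term; case: eqP => // /eqP d_neq0.
rewrite le_min le_M1 /M2 /Ej mulr_suml; apply: ler_sum => x _.
have [d_ge0 d_lt1] := andP d_range.
by rewrite [leRHS]mulrAC ler_wpM2r ?excess_le_sq // lt_def d_neq0 d_ge0.
Qed.

Variable J : nat.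
Hypothesis P_ge0 : forall x, 0 <= P x.
Hypothesis P_measurable : pi_measurable 0 P.
Hypothesis same_refines : forall k, (k < J)%N -> subrel (same k.+1) (same k).
Hypothesis delta_range : forall k, (k < J)%N -> 0 <= delta k.+1 < 1.
Hypothesis B_measurable : forall k, (k < J)%N -> pi_measurable k.+1 [in B k.+1].

Lemma Pj_ge0 k x : (k <= J)%N -> 0 <= Pj k x.
Proof.
elim: k x => [|k IHk] x kJ; first exact: P_ge0.
apply: mulr_ge0; first exact/IHk/ltnW.
by apply: factor_ge0; case/andP: (delta_range kJ).
Qed.

Lemma Pj_measurable k : (k <= J)%N -> pi_measurable k (Pj k).
Proof.
elim: k => [|k IHk] kJ x y xy /=; first exact: P_measurable.
rewrite (factor_measurable (same_refines kJ) (B_measurable kJ) xy).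
by rewrite (IHk (ltnW kJ) _ _ (same_refines kJ xy)).
Qed.

Lemma same_refines_le j k : (j <= k <= J)%N -> subrel (same k) (same j).
Proof.
elim: k => [|k IHk] /andP[jk kJ] x y xy; first by move: jk; rewrite leqn0 => /eqP->.
move: jk; rewrite leq_eqVlt => /orP[/eqP-> // | jk].
by apply: IHk; [rewrite -ltnS jk ltnW | exact: same_refines kJ _ _ xy].
Qed.

Lemma sum_Pj_stable (C : {set S}) j k : (j <= k <= J)%N -> pi_measurable j [in C] ->
  \sum_(x in C) Pj k x = \sum_(x in C) Pj j x.
Proof.
move=> /andP[+ kJ] C_meas; elim: k kJ => [|k IHk] kJ jk.
  by move: jk; rewrite leqn0 => /eqP->.
move: jk; rewrite leq_eqVlt => /orP[/eqP-> // | jk].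
have [_ d_lt1] := andP (delta_range kJ).
have C_meas_k : pi_measurable k [in C].
  by move=> x y xy; apply/C_meas/(same_refines_le _ xy); rewrite -ltnS jk ltnW.
rewrite (sum_Pj_succ d_lt1 (Pj_measurable (ltnW kJ)) C_meas_k).
exact: IHk (ltnW kJ) jk.
Qed.

Lemma sum_PJ_B_le_min_term j : (0 < j <= J)%N ->
  \sum_(x in B j) Pj J x <= min_term pi pis B delta P j.
Proof.
case: j => // k /= kJ.
have -> : \sum_(x in B k.+1) Pj J x = \sum_(x in B k.+1) Pj k.+1 x.
  by apply: sum_Pj_stable; [rewrite kJ leqnn | exact: B_measurable].
apply: sum_Pj_succ_B_le_min_term; first exact: delta_range.
  by move=> x; apply/Pj_ge0/ltnW.
exact/Pj_measurable/ltnW.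
Qed.

End Construction.

Theorem theorem2p1 (R : realFieldType) (S : finType) (T : Type) (pi : S -> T)
  (P : S -> R) (J : nat) (Ts : nat -> Type) (pis : forall j : nat, S -> Ts j)
  (B : nat -> {set S}) (delta : nat -> R) :
  (forall x, 0 <= P x) -> \sum_(x : S) P x = 1 ->
  (forall x x', pi x = pi x' -> P x = P x') ->
  (1 <= J)%N ->
  (forall j, (1 <= j <= J)%N -> forall x x',
      same pi pis j x x' -> same pi pis j.-1 x x') ->
  (forall j, (1 <= j <= J)%N -> 0 <= delta j <= 1 / 2) ->
  (forall j, (1 <= j <= J)%N -> forall x x',
      x \in B j -> same pi pis j x' x -> x' \in B j) ->
  \sum_(1 <= j < J.+1) min_term pi pis B delta P j < 1 ->
  \sum_(x in \bigcup_(1 <= j < J.+1) B j) Pj pi pis B delta P J x < 1.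
Proof.
move=> P_ge0 _ P_meas _ refines delta_half B_meas sum_lt1.
have P_measurable : pi_measurable pi pis 0 P by move=> x y /asboolP; apply: P_meas.
have same_refines k : (k < J)%N -> subrel (same pi pis k.+1) (same pi pis k).
  exact: refines k.+1.
have delta_range k : (k < J)%N -> 0 <= delta k.+1 < 1.
  move=> kJ; have /andP[d_ge0 d_le_half] := delta_half k.+1 kJ.
  by rewrite d_ge0 (le_lt_trans d_le_half) //; lra.
have B_measurable k : (k < J)%N -> pi_measurable pi pis k.+1 [in B k.+1].
  move=> kJ x y xy; apply/idP/idP => [xB | yB]; last exact: B_meas k.+1 kJ y x yB xy.
  by apply: (B_meas k.+1 kJ x) => //; rewrite same_sym.
have PJ_ge0 x : 0 <= Pj pi pis B delta P J x.
  exact (Pj_ge0 pi pis B P_ge0 delta_range x (leqnn J)).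
apply: le_lt_trans sum_lt1; apply: le_trans (sum_bigcup_le PJ_ge0 _ _) _.
apply: ler_sum_nat => j jJ.
exact: sum_PJ_B_le_min_term P_ge0 P_measurable same_refines delta_range B_measurable j jJ.
Qed.
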